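(* Let $G$ be a finite simple graph on $[d]$, $k\ge1$, and let $f,g$ be $k$-colorings of $G$. Then $f\sim_k g$ if and only if ${\bf x}_f-{\bf x}_g\in\langle [I_G]_2\rangle$.
   Context: A $k$-coloring of a graph $H$ is a map $f:V(H)\to[k]$ (not necessarily surjective) with $f(u)\neq f(v)$ for every edge. A Kempe switching: for colors $i<j$ and a connected component $C$ of $H[f^{-1}(i)\cup f^{-1}(j)]$, interchange $i$ and $j$ on $C$. $f\sim_k g$ (Kempe equivalent) if $g$ is obtained from $f$ by a finite sequence of Kempe switchings. A stable set of $G$ is a subset of $[d]$ with no edge of $G$ (including $\emptyset$ and singletons); $S(G)$ is the set of stable sets; $R[G]=\mathbb{K}[x_S : S\in S(G)]$ over a field $\mathbb{K}$, all variables of degree $1$. For a $k$-coloring $f$ of an induced subgraph $G[W]$, ${\bf x}_f=\prod_{\ell=1}^k x_{f^{-1}(\ell)}$. The stable set ideal $I_G$ is the kernel of the ring map $\pi:R[G]\to\mathbb{K}[t_1,\dots,t_d,s]$, $\pi(x_S)=s\prod_{j\in S}t_j$; a binomial $x_{S_1}\cdots x_{S_r}-x_{T_1}\cdots x_{T_r}$ lies in $I_G$ iff $S_1\cup\dots\cup S_r=T_1\cup\dots\cup T_r$ as multisets. $\langle [I_G]_2\rangle$ denotes the ideal of $R[G]$ generated by the homogeneous elements of degree $2$ of $I_G$ (equivalently, by the quadratic binomials in $I_G$). *)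

From HB Require Import structures.
From mathcomp Require Import all_boot all_order all_algebra.
From mathcomp Require Import mpoly.
Set Implicit Arguments. Unset Strict Implicit. Unset Printing Implicit Defensive.
Import GRing.Theory.
Local Open Scope ring_scope.

(* A simple graph on [d] = 'I_d is a relation G : rel 'I_d,
   assumed symmetric and irreflexive in the theorem.  Colors [k] = 'I_k. *)

Section Kempe.
Variables (d k : nat) (G : rel 'I_d).

Definition is_coloring (f : {ffun 'I_d -> 'I_k}) : Prop :=
  forall u v, G u v -> f u != f v.

Definition colored_ij (f : {ffun 'I_d -> 'I_k}) (i j : 'I_k) (v : 'I_d) : bool :=
  (f v == i) || (f v == j).

Definition kempe_edge (f : {ffun 'I_d -> 'I_k}) (i j : 'I_k) : rel 'I_d :=
  fun u v => [&& G u v, colored_ij f i j u & colored_ij f i j v].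

Definition kempe_chain (f : {ffun 'I_d -> 'I_k}) (i j : 'I_k) (u : 'I_d)
  : {set 'I_d} := [set v | connect (kempe_edge f i j) u v].

Definition kempe_switch (f : {ffun 'I_d -> 'I_k}) (i j : 'I_k) (C : {set 'I_d})
  : {ffun 'I_d -> 'I_k} :=
  [ffun v => if v \in C then
               (if f v == i then j else if f v == j then i else f v)
             else f v].

Definition kempe_step : rel {ffun 'I_d -> 'I_k} :=
  fun f g => [exists i : 'I_k, exists j : 'I_k, exists u : 'I_d,
    [&& (i < j)%N, colored_ij f i j u & g == kempe_switch f i j (kempe_chain f i j u)]].

Definition kempe_equiv (f g : {ffun 'I_d -> 'I_k}) : Prop :=
  connect kempe_step f g.

Definition stable (S : {set 'I_d}) : bool :=
  [forall u in S, forall v in S, ~~ G u v].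

Definition stableT := {S : {set 'I_d} | stable S}.

Definition nvars : nat := #|{: stableT}|.

Variable K : fieldType.

Definition RG := {mpoly K[nvars]}.

Definition xvar (S : stableT) : RG := 'X_(enum_rank S).

(* x_S for an arbitrary set: the variable if S is stable (0 otherwise; only
   applied to stable sets below) *)
Definition xset (S : {set 'I_d}) : RG :=
  if insub S is Some s then xvar s else 0.

Definition xmon_col (f : {ffun 'I_d -> 'I_k}) : RG :=
  \prod_(l < k) xset [set v | f v == l].

(* target ring K[t_1..t_d, s]: t_j = 'X_(widen j), s = 'X_(ord_max) *)
Definition pi_var (S : stableT) : {mpoly K[d.+1]} :=
  'X_(@ord_max d) * \prod_(j in val S) 'X_(widen_ord (leqnSn d) j).

Definition piG (p : RG) : {mpoly K[d.+1]} :=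
  comp_mpoly [tuple pi_var (enum_val i) | i < nvars] p.

Definition in_IG (p : RG) : bool := piG p == 0.

Definition homog2 (p : RG) : bool := all [pred m | mdeg m == 2%N] (msupp p).

Definition IG2 (p : RG) : bool := homog2 p && in_IG p.

Definition in_ideal_gen (P : pred RG) (p : RG) : Prop :=
  exists (s : seq (RG * RG)),
    all (fun hq => P hq.2) s /\ p = \sum_(hq <- s) hq.1 * hq.2.

End Kempe.

From HB Require Import structures.
From mathcomp Require Import all_boot all_order all_algebra.
From mathcomp Require Import perm mpoly.

Set Implicit Arguments.
Unset Strict Implicit.
Unset Printing Implicit Defensive.
Import GRing.Theory.

(** A Kempe switching of [f] on the colors [i], [j] exchanges the classes
    [f^-1(i)], [f^-1(j)] for two disjoint stable sets with the same union, so
    [x_f - x_g] is a monomial times a quadratic binomial of [I_G].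
    Conversely, let [W] be the set of monomials [x_h] with [h] Kempe equivalent
    to [f], and [phi] the linear form summing the coefficients of the monomials
    in [W].  If [x_h = m x_A x_B] and [pi (x_A x_B) = pi (x_C x_D)], then [A],
    [B] are the classes of two colors of [h] and [A + B = C + D] as multisets,
    so recoloring them as [C], [D] is a Kempe equivalence and [m x_C x_D] is in
    [W] too.  As every element of [[I_G]_2] has coefficient sum zero on each
    fibre of [pi], [phi] vanishes on [<[I_G]_2>], and [phi (x_f - x_g) = 0]
    forces [x_g = x_h] for some [h] Kempe equivalent to [f].  Then [g] is [h]
    up to a renaming of the colors, which is again a Kempe equivalence. *)

Lemma connect_ind (T : finType) (e : rel T) (R : T -> T -> Prop) :
  (forall x, R x x) -> (forall x y z, e x y -> R y z -> R x z) ->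
  forall x y, connect e x y -> R x y.
Proof.
move=> Rrefl Rstep x y /connectP[p]; elim: p x => [|z p IH] x /=.
  by move=> _ ->.
by case/andP=> exz zp yE; apply: Rstep exz (IH z zp yE).
Qed.

Lemma connect_descent (T : finType) (e : rel T) (P : T -> Prop) (m : T -> nat) y :
  (forall x, P x -> x != y -> exists2 z, connect e x z & P z /\ (m z < m x)%N) ->
  forall x, P x -> connect e x y.
Proof.
move=> step x; have [N] := ubnP (m x); elim: N x => // N IH x ltxN Px.
have [->|nxy] := eqVneq x y; first exact: connect0.
have [z exz [Pz ltzx]] := step x Px nxy.
exact: connect_trans exz (IH z (leq_trans ltzx ltxN) Pz).
Qed.

Lemma exists_ffun_neq (aT : finType) (rT : eqType) (f g : {ffun aT -> rT}) :
  f != g -> exists x, f x != g x.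
Proof.
move=> nfg; apply/existsP; apply: contraR nfg => /existsPn fg.
by apply/eqP/ffunP => x; apply/eqP; rewrite -[_ == _]negbK fg.
Qed.

Lemma tperm_in_pair (T : finType) (i j c : T) :
  (tperm i j c == i) || (tperm i j c == j) = (c == i) || (c == j).
Proof. by case: tpermP => [->|->|/eqP/negbTE-> /eqP/negbTE->]; rewrite ?eqxx ?orbT. Qed.

Lemma tperm_pair_swap (T : finType) (i j a b : T) :
  (a == i) || (a == j) -> (b == i) || (b == j) -> a != b -> tperm i j a = b.
Proof.
by case/orP=> /eqP-> /orP[]/eqP->; rewrite ?eqxx // ?tpermL ?tpermR.
Qed.

Lemma tperm_moved_in_pair (T : finType) (i j c : T) :
  tperm i j c != c -> (c == i) || (c == j).
Proof. by apply: contraR => /norP[ni nj]; rewrite tpermD ?eqxx // eq_sym. Qed.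

Section KempeEquivalence.
Variables (d k : nat) (G : rel 'I_d).
Hypothesis Gsym : ssrbool.symmetric G.
Local Notation coloring := {ffun 'I_d -> 'I_k}.
Implicit Types (h : coloring) (i j l : 'I_k) (v w : 'I_d).

Definition color_class h l : {set 'I_d} := [set v | h v == l].

Lemma is_coloring_classes h :
  is_coloring G h <-> forall l, stable G (color_class h l).
Proof.
split=> [hP l | st u v Guv].
  apply/forallP=> u; apply/implyP; rewrite inE => /eqP hu.
  apply/forallP=> v; apply/implyP; rewrite inE => /eqP hv.
  by apply/negP => /hP; rewrite hu hv eqxx.
apply: contraL Guv => /eqP huv; have /forallP/(_ u) := st (h u).
by rewrite inE eqxx => /forallP/(_ v); rewrite inE huv eqxx.
Qed.

Lemma colored_ijE h i j v : i != j -> colored_ij h i j v = (h v == i) + (h v == j) :> nat.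
Proof. by move=> ij; rewrite /colored_ij; case: eqP => [->|]; rewrite ?(negbTE ij). Qed.

Lemma kempe_switchE h i j C v :
  kempe_switch h i j C v = if v \in C then tperm i j (h v) else h v.
Proof.
rewrite ffunE; case: ifP => // _.
by case: tpermP => [->|->|/eqP/negbTE-> /eqP/negbTE->]; rewrite ?eqxx //; case: eqP.
Qed.

Lemma kempe_chain_colored h i j v w : colored_ij h i j v ->
  w \in kempe_chain G h i j v -> colored_ij h i j w.
Proof.
have cl : closed (kempe_edge G h i j) (colored_ij h i j).
  by move=> a b /and3P[_ ca cb]; rewrite -!topredE /= ca cb.
by move=> cv; rewrite inE => /(closed_connect cl); rewrite -!topredE /= => <-.
Qed.

Lemma kempe_switch_is_coloring h i j v : colored_ij h i j v -> is_coloring G h ->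
  is_coloring G (kempe_switch h i j (kempe_chain G h i j v)).
Proof.
move=> cv hP; set C := kempe_chain G h i j v.
have across a b : G a b -> a \in C -> b \notin C -> tperm i j (h a) != h b.
  move=> Gab aC bC; have ca := kempe_chain_colored cv aC.
  have ncb : ~~ colored_ij h i j b.
    apply: contra bC => cb; rewrite /C !inE in aC *; apply: connect_trans aC (connect1 _).
    by rewrite /kempe_edge Gab ca cb.
  by apply: contra ncb; rewrite /colored_ij => /eqP <-; rewrite (tperm_in_pair i j (h a)).
move=> a b Gab; rewrite !kempe_switchE.
case aC: (a \in C); case bC: (b \in C).
- by rewrite (inj_eq perm_inj); apply: hP.
- by apply: across; rewrite ?bC.
- by rewrite eq_sym; apply: across; rewrite ?aC // Gsym.
- exact: hP.
Qed.

Definition recolored_within i j h h' :=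
  forall v, h v != h' v -> colored_ij h i j v && colored_ij h' i j v.

Lemma recolored_within_colored i j h h' v : recolored_within i j h h' ->
  colored_ij h i j v = colored_ij h' i j v.
Proof.
by move=> hh'; have [e|/hh'/andP[-> ->]] // := eqVneq (h v) (h' v); rewrite /colored_ij e.
Qed.

Lemma recolored_within_count i j h h' v : i != j -> recolored_within i j h h' ->
  ((h v == i) + (h v == j) = (h' v == i) + (h' v == j))%N.
Proof. by move=> ij hh'; rewrite -!colored_ijE // (recolored_within_colored _ hh'). Qed.

Lemma color_class_within i j h h' l : recolored_within i j h h' ->
  l != i -> l != j -> color_class h' l = color_class h l.
Proof.
move=> hh' li lj; apply/setP => v; rewrite !inE.
have [-> //|/hh'] := eqVneq (h v) (h' v).
rewrite /colored_ij => /andP[/orP[]/eqP-> /orP[]/eqP->];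
  by rewrite ![_ == l]eq_sym ?(negbTE li) ?(negbTE lj).
Qed.

Lemma kempe_switch_within h i j C : recolored_within i j h (kempe_switch h i j C).
Proof.
move=> v; rewrite /colored_ij !kempe_switchE; case: ifP => _; last by rewrite eqxx.
by rewrite (tperm_in_pair i j (h v)) andbb eq_sym => /tperm_moved_in_pair.
Qed.

Lemma kempe_step_switch h i j v : i != j -> colored_ij h i j v ->
  kempe_step G h (kempe_switch h i j (kempe_chain G h i j v)).
Proof.
wlog lt_ij : i j / (i < j)%N => [wlog_lt ij cv | _ cv].
  have [lt|gt|/val_inj eq] := ltngtP i j; last by rewrite eq eqxx in ij.
    exact: wlog_lt.
  have edge_sym : kempe_edge G h i j =2 kempe_edge G h j i.
    by move=> a b; rewrite /kempe_edge /colored_ij !(orbC (h _ == i)).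
  have -> : kempe_switch h i j (kempe_chain G h i j v) =
            kempe_switch h j i (kempe_chain G h j i v).
    by apply/ffunP => w; rewrite !kempe_switchE tpermC !inE (eq_connect edge_sym).
  by apply: wlog_lt; rewrite // 1?eq_sym // /colored_ij orbC.
apply/existsP; exists i; apply/existsP; exists j; apply/existsP; exists v.
by rewrite lt_ij cv eqxx.
Qed.

Lemma kempe_step_is_coloring h h' : is_coloring G h -> kempe_step G h h' ->
  is_coloring G h'.
Proof.
move=> hP /existsP[i /existsP[j /existsP[v /and3P[_ cv /eqP->]]]].
exact: kempe_switch_is_coloring.
Qed.

Lemma kempe_step_within h h' : kempe_step G h h' ->
  exists i j, i != j /\ recolored_within i j h h'.
Proof.
move=> /existsP[i /existsP[j /existsP[v /and3P[lt_ij _ /eqP->]]]].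
by exists i, j; split; [rewrite neq_ltn lt_ij | exact: kempe_switch_within].
Qed.

Lemma kempe_equiv_is_coloring h h' : is_coloring G h -> kempe_equiv G h h' ->
  is_coloring G h'.
Proof.
move=> hP hh'; move: hh' hP.
apply: (connect_ind (R := fun x y => is_coloring G x -> is_coloring G y)) => // x y z xy yz xP.
exact/yz/(kempe_step_is_coloring xP xy).
Qed.

Lemma recolored_within_closed i j h h' : is_coloring G h -> is_coloring G h' ->
  recolored_within i j h h' -> closed (kempe_edge G h i j) [pred w | h w != h' w].
Proof.
move=> hP h'P hh' a b /and3P[Gab ca cb]; rewrite !inE.
have ca' : colored_ij h' i j a by rewrite -(recolored_within_colored _ hh').
have cb' : colored_ij h' i j b by rewrite -(recolored_within_colored _ hh').
rewrite -(tperm_pair_swap ca cb (hP _ _ Gab)) -(tperm_pair_swap ca' cb' (h'P _ _ Gab)).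
by rewrite (inj_eq perm_inj).
Qed.

(* The vertices where [x] and [h'] differ form a union of Kempe chains of [x]
   (recolored_within_closed), so switching one of them brings [x] closer to [h']. *)
Lemma kempe_equiv_within i j h h' : i != j -> is_coloring G h -> is_coloring G h' ->
  recolored_within i j h h' -> kempe_equiv G h h'.
Proof.
move=> ij hP h'P hh'; pose differ x := [set w | x w != h' w].
apply: (@connect_descent _ _ (fun x => is_coloring G x /\ recolored_within i j x h')
  (fun x => #|differ x|)) => [x [xP xh'] /exists_ffun_neq[v xv]|]; last by [].
have /andP[cv _] := xh' v xv.
set C := kempe_chain G x i j v; set z := kempe_switch x i j C.
have zE w : z w = if w \in C then h' w else x w.
  rewrite kempe_switchE; case: ifP => // wC.
  have dw : x w != h' w.
    move: wC; rewrite inE => /(closed_connect (recolored_within_closed xP h'P xh')).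
    by rewrite !inE xv => <-.
  by have /andP[cw cw'] := xh' w dw; apply: tperm_pair_swap.
have vC : v \in C by rewrite inE connect0.
exists z; first exact/connect1/kempe_step_switch.
split; [split|].
- exact: kempe_switch_is_coloring.
- by move=> w; rewrite /colored_ij !zE; case: ifP => _; [rewrite eqxx | exact: xh'].
- apply/proper_card/properP; split.
    by apply/subsetP => w; rewrite !inE zE; case: ifP; rewrite ?eqxx.
  by exists v; rewrite !inE // zE vC eqxx.
Qed.

Section Recolor.
Variables (h : coloring) (i j : 'I_k) (A B : {set 'I_d}).
Hypotheses (ij : i != j) (hP : is_coloring G h) (sA : stable G A) (sB : stable G B).
Hypothesis AB : forall v, ((v \in A) + (v \in B) = (h v == i) + (h v == j))%N.

Definition recolor : coloring :=
  [ffun v => if v \in A then i else if v \in B then j else h v].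

Let AB_split v :
  ~~ ((v \in A) && (v \in B)) /\ ((v \in A) || (v \in B)) = colored_ij h i j v.
Proof.
by move: (AB v); rewrite -colored_ijE //; case: (v \in A); case: (v \in B); case: colored_ij.
Qed.

Lemma recolor_within : recolored_within i j h recolor.
Proof.
move=> v; rewrite -(AB_split v).2 /colored_ij ffunE.
case: ifP => vA; first by rewrite eqxx.
by case: ifP => vB; rewrite ?eqxx ?orbT.
Qed.

Lemma color_class_recolor_l : color_class recolor i = A.
Proof.
apply/setP => v; rewrite !inE ffunE; have [_ ABc] := AB_split v.
case: ifP => vA; first by rewrite eqxx.
case: ifP => vB; first by rewrite eq_sym (negbTE ij).
by move: ABc; rewrite vA vB /colored_ij; case: (h v == i).
Qed.

Lemma color_class_recolor_r : color_class recolor j = B.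
Proof.
apply/setP => v; rewrite !inE ffunE; have [nAB ABc] := AB_split v.
case: ifP => vA; first by move: nAB; rewrite vA (negbTE ij) /= => /negbTE.
case: ifP => vB; first by rewrite eqxx.
by move: ABc; rewrite vA vB /colored_ij; case: (h v == j); rewrite ?orbT.
Qed.

Lemma recolor_is_coloring : is_coloring G recolor.
Proof.
apply/is_coloring_classes => l.
have [->|li] := eqVneq l i; first by rewrite color_class_recolor_l.
have [->|lj] := eqVneq l j; first by rewrite color_class_recolor_r.
by rewrite (color_class_within recolor_within li lj); apply: (is_coloring_classes h).1.
Qed.

Lemma kempe_equiv_recolor : kempe_equiv G h recolor.
Proof. exact: kempe_equiv_within ij hP recolor_is_coloring recolor_within. Qed.

End Recolor.

Lemma kempe_equiv_relabel h h' : is_coloring G h -> is_coloring G h' ->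
  (forall l, exists l', color_class h l' = color_class h' l) -> kempe_equiv G h h'.
Proof.
move=> hP h'P hh'; pose differ x := [set w | x w != h' w].
apply: (@connect_descent _ _ (fun x => is_coloring G x /\
    forall l, exists l', color_class x l' = color_class h' l) (fun x => #|differ x|))
  => [x [xP xh'] /exists_ffun_neq[v xv]|]; last by [].
have [l' xl'] := xh' (h' v).
have xvE : x v = l' by move/setP: xl' => /(_ v); rewrite !inE eqxx => /eqP.
set s := tperm (h' v) l'; pose z : coloring := [ffun w => s (x w)].
have zE w : z w = s (x w) by rewrite ffunE.
have zP : is_coloring G z by move=> a b Gab; rewrite !zE (inj_eq perm_inj); apply: xP.
exists z.
  apply: (@kempe_equiv_within (h' v) l') => //; first by rewrite -xvE eq_sym.
  move=> w; rewrite /colored_ij zE (tperm_in_pair (h' v) l' (x w)) andbb eq_sym.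
  exact: tperm_moved_in_pair.
split=> [|{xh'}]; first split=> // m.
  have [m' xm'] := xh' m; exists (s m'); rewrite -xm'.
  by apply/setP => w; rewrite !inE zE (inj_eq perm_inj).
apply/proper_card/properP; split; last by exists v; rewrite !inE // zE xvE tpermR eqxx.
apply/subsetP => w; rewrite !inE zE.
have /setP/(_ w) := xl'; rewrite !inE => xwE.
case: tpermP => [xw|xw|_ _ //] _.
- rewrite xw; apply/eqP => hw; move: xwE; rewrite xw -hw eqxx => /eqP e.
  by move: xv; rewrite xvE e eqxx.
- by move: xwE; rewrite xw eqxx => /esym/eqP->; rewrite -xvE.
Qed.

End KempeEquivalence.

Local Open Scope ring_scope.

Lemma mdeg2P n (e : 'X_{1..n}) : mdeg e = 2%N -> exists a b, e = (U_(a) + U_(b))%MM.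
Proof.
move=> e2; have [a ea] : exists a, e a != 0%N.
  case: (pickP (fun a => e a != 0%N)) => [a ea|e0]; first by exists a.
  suff ez : e = 0%MM by rewrite ez mdeg0 in e2.
  by apply/mnmP => i; rewrite mnm0E; move/negbFE/eqP: (e0 i).
have /submK eE : (U_(a) <= e)%MM by rewrite lep1mP.
have /eqP/mdeg1P[b /eqP eb] : mdeg (e - U_(a))%MM = 1%N.
  by have := mdegD (e - U_(a))%MM U_(a); rewrite eE mdeg1 e2 addn1 => -[->].
by exists b, a; rewrite -eE eb.
Qed.

Lemma big_fibres_eq0 (R : nmodType) (I J : eqType) (s : seq I) (pi : I -> J)
    (P : pred I) (F : I -> R) :
  (forall y, \sum_(x <- s | pi x == y) F x = 0) ->
  {in s &, forall x x', pi x = pi x' -> P x = P x'} ->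
  \sum_(x <- s | P x) F x = 0.
Proof.
move=> fibre Pconst; set U := undup (map pi s).
transitivity (\sum_(y <- U) \sum_(x <- s | P x && (pi x == y)) F x).
  rewrite -(exchange_big_dep xpredT) //= big_seq_cond [RHS]big_seq_cond.
  apply: eq_bigr => x /andP[xs _].
  rewrite big_mkcond (bigD1_seq (pi x)) ?undup_uniq ?mem_undup ?map_f //= eqxx.
  by rewrite big1 ?addr0 // => y /negbTE; rewrite eq_sym => ->.
rewrite big_seq big1 // => y; rewrite mem_undup => /mapP[x0 x0s ->].
rewrite big_seq_cond; have [Px0|nPx0] := boolP (P x0).
  rewrite -[RHS](fibre (pi x0)) [RHS]big_seq_cond; apply: eq_bigl => x.
  case xs: (x \in s) => //=; case: eqP => [e|_]; rewrite ?andbF //.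
  by rewrite (Pconst _ _ xs x0s e) Px0.
rewrite big1 // => x /andP[xs /andP[Px /eqP e]].
by move: Px; rewrite (Pconst _ _ xs x0s e) (negbTE nPx0).
Qed.

Section CoefficientSum.
Variables (n : nat) (R : nzRingType) (W : seq 'X_{1..n}).

Definition coef_sum (p : {mpoly R[n]}) : R := \sum_(w <- W) p@_w.

Lemma coef_sum_is_zmod_morphism : zmod_morphism coef_sum.
Proof. by move=> p q; rewrite /coef_sum -sumrB; apply: eq_bigr => w _; rewrite mcoeffB. Qed.

HB.instance Definition _ :=
  GRing.isZmodMorphism.Build {mpoly R[n]} R coef_sum coef_sum_is_zmod_morphism.

Lemma coef_sumZ c p : coef_sum (c *: p) = c * coef_sum p.
Proof. by rewrite /coef_sum mulr_sumr; apply: eq_bigr => w _; rewrite mcoeffZ. Qed.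

Lemma coef_sumX m : uniq W -> coef_sum 'X_[m] = (m \in W)%:R.
Proof.
move=> Wu; rewrite /coef_sum (eq_bigr (fun w => (w == m)%:R)) => [|w _]; last first.
  by rewrite mcoeffX eq_sym.
case mW: (m \in W); last first.
  by rewrite big1_seq // => w /andP[_ wW]; case: eqP wW => // ->; rewrite mW.
by rewrite (bigD1_seq m) //= eqxx big1 ?addr0 // => w /negbTE->.
Qed.

End CoefficientSum.

Section ColoringMonomials.
Variables (d k : nat) (G : rel 'I_d) (K : fieldType).
Hypothesis Gsym : ssrbool.symmetric G.
Local Notation n := (nvars G).
Local Notation coloring := {ffun 'I_d -> 'I_k}.
Local Notation ideal2 := (in_ideal_gen (@IG2 _ G K)).
Implicit Types (f g h : coloring) (S : {set 'I_d}) (a b : 'I_n) (e : 'X_{1..n}).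

Lemma in_ideal_genD (P : pred (RG G K)) p q :
  in_ideal_gen P p -> in_ideal_gen P q -> in_ideal_gen P (p + q).
Proof.
move=> [s [sP ->]] [t [tP ->]]; exists (s ++ t).
by rewrite all_cat sP tP big_cat.
Qed.

Lemma in_ideal_gen_mul (P : pred (RG G K)) r q : P q -> in_ideal_gen P (r * q).
Proof. by move=> Pq; exists [:: (r, q)]; rewrite /= Pq big_seq1. Qed.

Definition stable_of a : {set 'I_d} := val (enum_val a).

Lemma stable_of_stable a : stable G (stable_of a).
Proof. exact: valP. Qed.

Lemma stable_of_inj : injective stable_of.
Proof. by move=> a b /val_inj/enum_val_inj. Qed.

Lemma stable_ofP S : stable G S -> exists a, stable_of a = S.
Proof.
by move=> sS; exists (enum_rank (exist _ S sS : stableT G)); rewrite /stable_of enum_rankK.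
Qed.

(* The exponent of [x_S]; it is [0], the exponent of [1], if [S] is not stable. *)
Definition set_mnm S : 'X_{1..n} :=
  if (insub S : option (stableT G)) is Some s then U_(enum_rank s)%MM else 0%MM.

Lemma set_mnm_stable_of a : set_mnm (stable_of a) = U_(a)%MM.
Proof. by rewrite /set_mnm /stable_of valK enum_valK. Qed.

Lemma mdeg_set_mnm S : stable G S -> mdeg (set_mnm S) = 1%N.
Proof. by case/stable_ofP => a <-; rewrite set_mnm_stable_of mdeg1. Qed.

Lemma xset_mnm S : stable G S -> xset G K S = 'X_[set_mnm S].
Proof.
by case/stable_ofP => a <-; rewrite set_mnm_stable_of /xset /stable_of valK /xvar enum_valK.
Qed.

Definition coloring_mnm h : 'X_{1..n} := (\sum_(l < k) set_mnm (color_class h l))%MM.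

Lemma xmon_colE h : is_coloring G h -> xmon_col G K h = 'X_[coloring_mnm h].
Proof.
move=> hP; rewrite /xmon_col /coloring_mnm -mprodXE; apply: eq_bigr => l _.
exact: xset_mnm ((is_coloring_classes G h).1 hP l).
Qed.

Lemma coloring_mnmE h a : is_coloring G h ->
  coloring_mnm h a = #|[set l | color_class h l == stable_of a]|.
Proof.
move=> hP; rewrite mnm_sumE -sum1_card [RHS]big_mkcond; apply: eq_bigr => l _.
rewrite inE; have [b <-] := stable_ofP ((is_coloring_classes G h).1 hP l).
by rewrite set_mnm_stable_of mnm1E (inj_eq stable_of_inj); case: eqP.
Qed.

Lemma coloring_mnm_within i j h h' : i != j -> recolored_within i j h h' ->
  exists R,
    coloring_mnm h = (R + (set_mnm (color_class h i) + set_mnm (color_class h j)))%MM /\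
    coloring_mnm h' = (R + (set_mnm (color_class h' i) + set_mnm (color_class h' j)))%MM.
Proof.
move=> ij hh'.
have split_ij x : coloring_mnm x = (\sum_(l | (l != i) && (l != j)) set_mnm (color_class x l)
    + (set_mnm (color_class x i) + set_mnm (color_class x j)))%MM.
  by rewrite /coloring_mnm (bigD1 i) //= (bigD1 j) 1?eq_sym //= addmA addmC.
exists (\sum_(l | (l != i) && (l != j)) set_mnm (color_class h l))%MM.
rewrite !split_ij; split=> //; congr (_ + _)%MM.
by apply: eq_bigr => l /andP[li lj]; rewrite (color_class_within hh' li lj).
Qed.

Lemma coloring_mnm_pair h m a b : is_coloring G h ->
    coloring_mnm h = (m + (U_(a) + U_(b)))%MM ->
  exists i j, [/\ i != j, color_class h i = stable_of a & color_class h j = stable_of b].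
Proof.
move=> hP hm; have count c : coloring_mnm h c = (m c + ((a == c) + (b == c)))%N.
  by rewrite hm !mnmDE !mnm1E.
have /card_gt0P[i] : (0 < #|[set l | color_class h l == stable_of a]|)%N.
  by rewrite -coloring_mnmE // count eqxx add1n addnS.
rewrite inE => /eqP hi.
have /card_gt0P[j] : (0 < #|[set l | color_class h l == stable_of b] :\ i|)%N.
  move: (cardsD1 i [set l | color_class h l == stable_of b]).
  rewrite -coloring_mnmE // count inE hi (inj_eq stable_of_inj) eqxx addnCA => /addnI <-.
  by rewrite addn1.
by rewrite !inE => /andP[ji /eqP hj]; exists i, j; rewrite eq_sym.
Qed.

(* The exponent of [pi x_S = s * prod_(v in S) t_v], where [s] is the last variable. *)
Definition pi_set_mnm S : 'X_{1..d.+1} :=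
  (U_(ord_max) + \sum_(v in S) U_(widen_ord (leqnSn d) v))%MM.

Definition pi_mnm e : 'X_{1..d.+1} := (\sum_(a < n) pi_set_mnm (stable_of a) *+ e a)%MM.

Lemma piG_X e : @piG _ G K 'X_[e] = 'X_[pi_mnm e].
Proof.
rewrite /piG comp_mpolyX /pi_mnm -mprodXnE; apply: eq_bigr => a _.
by rewrite tnth_mktuple /pi_var /pi_set_mnm mpolyXD mprodXE.
Qed.

Lemma piG_coef p mu : (@piG _ G K p)@_mu = \sum_(e <- msupp p | pi_mnm e == mu) p@_e.
Proof.
rewrite /piG comp_mpolyEX raddf_sum [RHS]big_mkcond; apply: eq_bigr => e _.
by rewrite /= mcoeffZ -[_ \mPo _]/(@piG _ G K _) piG_X mcoeffX mulr_natr mulrb.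
Qed.

Lemma pi_mnmE e t : pi_mnm e t = (\sum_(a < n) pi_set_mnm (stable_of a) t * e a)%N.
Proof. by rewrite mnm_sumE; apply: eq_bigr => a _; rewrite mulmnE. Qed.

Lemma pi_mnmD e e' : pi_mnm (e + e')%MM = (pi_mnm e + pi_mnm e')%MM.
Proof.
apply/mnmP => t; rewrite mnmDE !pi_mnmE -big_split.
by apply: eq_bigr => a _; rewrite mnmDE mulnDr.
Qed.

Lemma pi_mnmU a : pi_mnm U_(a)%MM = pi_set_mnm (stable_of a).
Proof.
apply/mnmP => t; rewrite pi_mnmE (bigD1 a) //= mnm1E eqxx muln1 big1 ?addn0 //.
by move=> b /negbTE; rewrite mnm1E eq_sym => ->; rewrite muln0.
Qed.

Lemma pi_mnm_set S : stable G S -> pi_mnm (set_mnm S) = pi_set_mnm S.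
Proof. by case/stable_ofP => a <-; rewrite set_mnm_stable_of pi_mnmU. Qed.

Lemma pi_set_mnmE S t :
  pi_set_mnm S t = if unlift ord_max t is Some v then (v \in S : nat) else 1%N.
Proof.
rewrite mnmDE mnm1E mnm_sumE; case: unliftP => [v ->|->]; last first.
  by rewrite eqxx big1 // => w _; rewrite mnm1E -val_eqE /= ltn_eqF.
have wE w : (widen_ord (leqnSn d) w == lift ord_max v) = (w == v).
  by rewrite -val_eqE /= /bump leqNgt ltn_ord add0n.
rewrite (negbTE (neq_lift _ _)) add0n.
under eq_bigr do rewrite mnm1E wE.
case vS: (v \in S); last by rewrite big1 // => w wS; case: eqP wS => // ->; rewrite vS.
by rewrite (bigD1 v) //= eqxx big1 // => w /andP[_ /negbTE->].
Qed.

Lemma pi_set_mnm_pairP (A B C D : {set 'I_d}) :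
  reflect (forall v, (v \in A) + (v \in B) = (v \in C) + (v \in D))%N
          (pi_set_mnm A + pi_set_mnm B == pi_set_mnm C + pi_set_mnm D)%MM.
Proof.
apply: (iffP eqP) => [/mnmP ABCD v | ABCD].
  by have := ABCD (lift ord_max v); rewrite !(mnmDE _ (pi_set_mnm _)) !pi_set_mnmE liftK.
by apply/mnmP => t; rewrite !(mnmDE _ (pi_set_mnm _)) !pi_set_mnmE; case: unlift.
Qed.

Lemma IG2_binomial e e' : mdeg e = 2%N -> mdeg e' = 2%N -> pi_mnm e = pi_mnm e' ->
  IG2 ('X_[e] - 'X_[e'] : RG G K).
Proof.
move=> e2 e'2 pe; apply/andP; split.
  apply/allP => m /msuppB_le; rewrite mem_cat !msuppX !inE.
  by case/orP => /eqP->; rewrite ?e2 ?e'2.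
by rewrite /in_IG /piG comp_mpolyB -!/(@piG _ G K _) !piG_X pe subrr.
Qed.

Lemma recolored_within_ideal i j h h' : i != j -> is_coloring G h -> is_coloring G h' ->
  recolored_within i j h h' -> ideal2 (xmon_col G K h - xmon_col G K h').
Proof.
move=> ij hP h'P hh'.
have cl x l : is_coloring G x -> stable G (color_class x l).
  by move=> xP; apply: (is_coloring_classes G x).1.
rewrite !xmon_colE //; have [R [-> ->]] := coloring_mnm_within ij hh'.
rewrite !(@mpolyXD _ _ R) -mulrBr; apply: in_ideal_gen_mul; apply: IG2_binomial.
- by rewrite mdegD !mdeg_set_mnm ?cl.
- by rewrite mdegD !mdeg_set_mnm ?cl.
rewrite !pi_mnmD !pi_mnm_set ?cl //; apply/eqP/pi_set_mnm_pairP => v.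
by rewrite !inE; apply: recolored_within_count.
Qed.

Lemma kempe_equiv_ideal f g : is_coloring G f -> kempe_equiv G f g ->
  ideal2 (xmon_col G K f - xmon_col G K g).
Proof.
move=> fP fg; move: fg fP; apply: (connect_ind (R := fun x y =>
  is_coloring G x -> ideal2 (xmon_col G K x - xmon_col G K y))) => [x _|x y z xy yz xP].
  by exists [::]; rewrite big_nil subrr.
have yP := kempe_step_is_coloring Gsym xP xy.
have [i [j [ij xy']]] := kempe_step_within xy.
have -> : xmon_col G K x - xmon_col G K z =
    (xmon_col G K x - xmon_col G K y) + (xmon_col G K y - xmon_col G K z).
  by rewrite addrA subrK.
by apply: in_ideal_genD; [exact: recolored_within_ideal ij xP yP xy' | exact: yz].
Qed.

Section QuadraticMoves.
Variable W : seq 'X_{1..n}.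
Hypothesis W_uniq : uniq W.
Hypothesis W_move : forall m e e', mdeg e = 2%N -> mdeg e' = 2%N ->
  pi_mnm e = pi_mnm e' -> (m + e)%MM \in W -> (m + e')%MM \in W.

(* Group the terms of [q] by the fibres of [pi_mnm]: each fibre sums to a
   coefficient of [pi q = 0], and membership of [m + e] in [W] is constant on it. *)
Lemma coef_sum_mulX_IG2 m (q : RG G K) : IG2 q -> coef_sum W ('X_[m] * q) = 0.
Proof.
case/andP => /allP q2 /eqP piq; have deg2 e : e \in msupp q -> mdeg e = 2%N by move/q2/eqP.
rewrite {1}(mpolyE q) mulr_sumr raddf_sum.
rewrite (eq_bigr (fun e => if (m + e)%MM \in W then q@_e else 0)) => [|e _]; last first.
  by rewrite /= -scalerAr -mpolyXD coef_sumZ coef_sumX // mulr_natr mulrb.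
rewrite -big_mkcond; apply: (big_fibres_eq0 (pi := pi_mnm)) => [mu|e e' eS e'S pe].
  by rewrite -piG_coef piq mcoeff0.
by apply/idP/idP; apply: W_move; rewrite ?deg2 ?pe.
Qed.

Lemma coef_sum_ideal (p : RG G K) : ideal2 p -> coef_sum W p = 0.
Proof.
case=> s [sP ->]; rewrite raddf_sum big_seq big1 // => -[r q] /(allP sP) /= q2.
rewrite {1}(mpolyE r) mulr_suml raddf_sum big1 // => m _.
by rewrite /= -scalerAl coef_sumZ coef_sum_mulX_IG2 // mulr0.
Qed.

End QuadraticMoves.

Definition kempe_class_mnms f : seq 'X_{1..n} :=
  undup (map coloring_mnm (enum (connect (kempe_step G) f))).

Lemma kempe_class_mnmsP f m :
  reflect (exists2 h, kempe_equiv G f h & coloring_mnm h = m) (m \in kempe_class_mnms f).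
Proof.
rewrite mem_undup; apply: (iffP mapP) => [[h]|[h fh <-]]; last by exists h; rewrite ?mem_enum.
by rewrite mem_enum => fh ->; exists h.
Qed.

Lemma kempe_class_mnms_move f : is_coloring G f -> forall m e e',
  mdeg e = 2%N -> mdeg e' = 2%N -> pi_mnm e = pi_mnm e' ->
  (m + e)%MM \in kempe_class_mnms f -> (m + e')%MM \in kempe_class_mnms f.
Proof.
move=> fP m _ _ /mdeg2P[a [b ->]] /mdeg2P[c [c' ->]] pe /kempe_class_mnmsP[h fh hm].
have hP := kempe_equiv_is_coloring Gsym fP fh.
have [i [j [ij hi hj]]] := coloring_mnm_pair hP hm.
have AB v : ((v \in stable_of c) + (v \in stable_of c') = (h v == i) + (h v == j))%N.
  move/eqP: pe; rewrite !pi_mnmD !pi_mnmU eq_sym => /pi_set_mnm_pairP ->.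
  by rewrite -hi -hj !inE.
apply/kempe_class_mnmsP; exists (recolor h i j (stable_of c) (stable_of c')).
  apply: connect_trans fh (kempe_equiv_recolor Gsym ij hP _ _ AB); exact: stable_of_stable.
have [R [hR ->]] := coloring_mnm_within ij (recolor_within ij AB).
rewrite color_class_recolor_l // color_class_recolor_r // !set_mnm_stable_of.
congr (_ + _)%MM; apply: (@addIm _ (U_(a) + U_(b))%MM).
by rewrite -hm hR hi hj !set_mnm_stable_of.
Qed.

Lemma ideal_kempe_equiv f g : is_coloring G f -> is_coloring G g ->
  ideal2 (xmon_col G K f - xmon_col G K g) -> kempe_equiv G f g.
Proof.
move=> fP gP /(coef_sum_ideal (undup_uniq _) (kempe_class_mnms_move fP)).
have fW : coloring_mnm f \in kempe_class_mnms f.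
  by apply/kempe_class_mnmsP; exists f => //; apply: connect0.
rewrite !xmon_colE // raddfB /= !coef_sumX ?undup_uniq // fW.
case: kempe_class_mnmsP => [[h fh hg] _|_]; last by rewrite subr0 => /eqP; rewrite oner_eq0.
have hP := kempe_equiv_is_coloring Gsym fP fh.
apply: connect_trans fh (kempe_equiv_relabel Gsym hP gP _) => l.
have [a ga] := stable_ofP ((is_coloring_classes G g).1 gP l).
have /card_gt0P[l'] : (0 < #|[set l' | color_class h l' == stable_of a]|)%N.
  rewrite -coloring_mnmE // hg coloring_mnmE // card_gt0.
  by apply/set0Pn; exists l; rewrite inE ga.
by rewrite inE ga => /eqP hl'; exists l'.
Qed.

End ColoringMonomials.

Theorem proposition2p3 (K : fieldType) (d k : nat) (G : rel 'I_d)
  (Gsym : ssrbool.symmetric G) (Girr : irreflexive G) (hk : (1 <= k)%N)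
  (f g : {ffun 'I_d -> 'I_k}) :
  is_coloring G f -> is_coloring G g ->
  (kempe_equiv G f g <->
   in_ideal_gen (@IG2 _ G K) (xmon_col G K f - xmon_col G K g)).
Proof.
by move=> fP gP; split; [exact: kempe_equiv_ideal | exact: ideal_kempe_equiv].
Qed.
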